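(* Let $f: \mathbb{R}^n \to \mathbb{R}^n$ be topical. There exists $1 \le i \le n$ such that $\lim_{k\to\infty} f^k_i(y)/k = \overline{\chi}(f)$ for all $y \in \mathbb{R}^n$.
   Context: $f$ is topical if $f(x+h) = f(x)+h$ for all $h\in\mathbb{R}$ (scalar added to each coordinate) and $x\le y$ componentwise implies $f(x)\le f(y)$. The upper cycle time is $\overline{\chi}(f) = \lim_{k\to\infty} \max_i f^k_i(x)/k$, which exists and is independent of $x$. *)

From HB Require Import structures.
From mathcomp Require Import all_boot all_order all_algebra.
From mathcomp Require Import all_classical all_reals all_analysis.
Set Implicit Arguments. Unset Strict Implicit. Unset Printing Implicit Defensive.
Import Order.TTheory GRing.Theory Num.Theory.
Import numFieldNormedType.Exports.
Local Open Scope ring_scope.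

(* Vectors of R^(n+1) are functions 'I_n.+1 -> R (coordinates 0..n). *)

Definition topical (R : realType) (n : nat)
    (f : ('I_n -> R) -> ('I_n -> R)) : Prop :=
  (forall (x : 'I_n -> R) (h : R), f (fun i => x i + h) = (fun i => f x i + h)) /\
  (forall x y : 'I_n -> R, (forall i, x i <= y i) -> forall i, f x i <= f y i).

Definition vmax (R : realType) (n : nat) (x : 'I_n.+1 -> R) : R :=
  \big[Num.max/x ord0]_(i < n.+1) x i.

(* upper cycle time: lim_k max_i f^k_i(x)/k, taken at x = 0 (the limit exists
   and is independent of x). *)
Definition upper_cycle_time (R : realType) (n : nat)
    (f : ('I_n.+1 -> R) -> ('I_n.+1 -> R)) : R :=
  limn (fun k : nat => vmax (iter k f (fun _ => 0)) / k%:R).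

From HB Require Import structures.
From mathcomp Require Import all_boot all_order all_algebra.
From mathcomp Require Import all_classical all_reals all_analysis.
From mathcomp Require Import lra.
Import Order.TTheory GRing.Theory Num.Theory.
Import numFieldNormedType.Exports.
Local Open Scope ring_scope.
Local Open Scope classical_set_scope.

(* Let rho_i be the best linear lower growth rate of the coordinate orbit
   k |-> f^k_i(0), and pick i with rho_i maximal.  Then f^k_i(0) >= k (rho_i - e) - C
   by definition, and the key point is the matching upper bound
   f^k_j(0) <= k (rho_i + e) + C for every j: otherwise g := f - (rho_i + e) is a
   topical map with an orbit unbounded above, and such a map always has a coordinate
   whose orbit is bounded below, i.e. a coordinate growing at rate rho_i + e.
   The latter is a compactness argument: the normalised running maxima of the orbit
   are sub-eigenvectors of g on their large coordinates, a cluster point of them is a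
   sub-eigenvector with entries -oo allowed, and iterating it bounds the orbit below
   on its finite coordinates.  Since topical maps are sup-norm nonexpansive, the
   rates do not depend on the starting point, and max_j f^k_j(0) / k has the same
   limit rho_i. *)


Section Topical.
Context {R : realType} {N : nat}.
Implicit Types (g : ('I_N -> R) -> 'I_N -> R) (x y : 'I_N -> R) (c : R).

Lemma topicalD {g} x c : topical g -> g (fun i => x i + c) = (fun i => g x i + c).
Proof. by case=> gD _; rewrite gD. Qed.

Lemma topical_le {g x y} : topical g ->
  (forall i, x i <= y i) -> forall i, g x i <= g y i.
Proof. by case=> _ gle; apply: gle. Qed.

Lemma topical_leD {g x y c} : topical g ->
  (forall j, x j <= y j + c) -> forall i, g x i <= g y i + c.
Proof. by move=> tg /(topical_le tg) xy i; have := xy i; rewrite (topicalD _ _ tg). Qed.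

Lemma topical_dist {g x y c} : topical g ->
  (forall j, `|x j - y j| <= c) -> forall i, `|g x i - g y i| <= c.
Proof.
move=> tg xy i; have [xyc yxc] : (forall j, x j <= y j + c) /\ (forall j, y j <= x j + c).
  by split=> j; have := xy j; rewrite ler_norml => /andP[]; lra.
have := topical_leD tg xyc i; have := topical_leD tg yxc i.
by rewrite ler_norml; lra.
Qed.

Lemma topical_iter {g} k : topical g -> topical (iter k g).
Proof.
move=> tg; elim: k => [|k [iterD iter_le]] //=; split=> [x c|x y xy i].
- by rewrite /= iterD (topicalD _ _ tg).
- by apply: (topical_le tg); apply: iter_le.
Qed.

Lemma topical_subr {g} c : topical g -> topical (fun x i => g x i - c).
Proof.
move=> tg; split=> [x h|x y xy i].
- by rewrite (topicalD _ _ tg); apply/funext => i; rewrite addrAC.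
- by rewrite lerD2r (topical_le tg).
Qed.

Lemma iter_topical_subr {g} c k x : topical g ->
  iter k (fun x i => g x i - c) x = (fun i => iter k g x i - k%:R * c).
Proof.
move=> tg; elim: k => [|k IH] /=; first by apply/funext => i; rewrite mul0r subr0.
rewrite IH (topicalD _ _ tg); apply/funext => i.
by rewrite -addrA -opprD mulrSr mulrDl mul1r addrC.
Qed.

Lemma iter_topical_dist {g} k {x y c} : topical g ->
  (forall j, `|x j - y j| <= c) -> forall i, `|iter k g x i - iter k g y i| <= c.
Proof. by move=> tg; apply: topical_dist; apply: topical_iter. Qed.

Lemma iter_topical_linear {g c} k i : topical g ->
  (forall j, `|g (fun _ => 0) j| <= c) -> `|iter k g (fun _ => 0) i| <= k%:R * c.
Proof.
move=> tg g0c; elim: k i => [|k IH] i; first by rewrite normr0 mul0r.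
have step : `|g (iter k g (fun _ => 0)) i - g (fun _ => 0) i| <= k%:R * c.
  by apply: topical_dist => // j; rewrite subr0.
rewrite iterS -natr1 mulrDl mul1r -(subrK (g (fun _ => 0) i) (g _ i)).
exact: le_trans (ler_normD _ _) (lerD step (g0c i)).
Qed.

Lemma coord_bound x : exists c, forall j, `|x j| <= c.
Proof. by exists (\big[Num.max/0]_j `|x j|) => j; apply: le_bigmax. Qed.

End Topical.

Lemma compact_seq_cluster {T : topologicalType} {K : set T} :
  compact K -> forall u : nat -> T, (forall m, K (u m)) ->
  exists2 e, K e & forall B m0, nbhs e B -> exists2 m, (m0 <= m)%N & B (u m).
Proof.
move=> cK u Ku; have [|e [Ke cle]] := cK (u @ \oo) _.
  by exists 0%N => // m _; apply: Ku.
exists e => // B m0 eB.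
have tail : (u @ \oo) (u @` [set m | (m0 <= m)%N]) by exists m0 => // m; exists m.
by have [_ [[m m0m <-] Bum]] := cle _ _ tail eB; exists m.
Qed.

Lemma nbhs_coord (I : eqType) (K : I -> topologicalType) (e : prod_topology K)
    (i : I) (B : set (K i)) :
  nbhs (e i) B -> nbhs e [set x : prod_topology K | B (x i)].
Proof. exact: proj_continuous. Qed.

Lemma compact_unit_cube (R : realType) (N : nat) :
  compact [set x : prod_topology (fun _ : 'I_N => R) | forall i, `[0, 1] (x i)].
Proof. exact: (tychonoff (fun _ => @segment_compact R 0 1)). Qed.

Lemma cvg_linear_rate (R : realType) (w : nat -> R) (a : R) :
  (forall e, 0 < e -> exists C, forall k, `|w k - k%:R * a| <= k%:R * e + C) ->
  w k / k%:R @[k --> \oo] --> a.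
Proof.
move=> wa; apply/cvgrPdist_le => e e0.
have [C wC] : exists C, forall k, `|w k - k%:R * a| <= k%:R * (e / 2) + C.
  by apply: wa; rewrite divr_gt0.
near=> k.
have k0 : 0 < k%:R :> R by rewrite ltr0n; near: k; exists 1%N.
have Ck : C <= k%:R * (e / 2).
  rewrite -ler_pdivrMr ?divr_gt0 //; near: k; exact: nbhs_infty_ger.
rewrite distrC -[a](mulfK (lt0r_neq0 k0)) -mulrBl normrM normfV (gtr0_norm k0).
rewrite ler_pdivrMr // [a * _]mulrC.
by apply: le_trans (wC k) _; lra.
Unshelve. all: by end_near.
Qed.

Section UnboundedOrbit.
Variables (R : realType) (N : nat) (h : ('I_N -> R) -> 'I_N -> R).
Hypothesis th : topical h.
Hypothesis h_unbounded : forall C : R, exists k i, C < iter k h (fun _ => 0) i.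

Local Notation orbit k := (iter k h (fun _ => 0)).
Local Notation vec := (prod_topology (fun _ : 'I_N => R)).

Fixpoint running_max m : 'I_N -> R :=
  if m is m'.+1 then fun i => Num.max (running_max m' i) (orbit m i) else fun _ => 0.

Lemma running_max_ge0 m i : 0 <= running_max m i.
Proof. by elim: m => //= m IH; rewrite le_max IH. Qed.

Lemma orbit_le_running_max m i : orbit m i <= running_max m i.
Proof. by case: m => //= m; rewrite le_max lexx orbT. Qed.

Lemma running_max_mono m m' i : (m <= m')%N -> running_max m i <= running_max m' i.
Proof.
elim: m' => [|m' IH]; first by rewrite leqn0 => /eqP->.
rewrite leq_eqVlt ltnS => /predU1P[-> //|/IH/le_trans]; apply.
by rewrite /= le_max lexx.
Qed.

(* A positive entry of [running_max m] is some [orbit k.+1 i = h (orbit k) i]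
   with [orbit k <= running_max m]. *)
Lemma running_max_subeigen m i :
  running_max m i <= 0 \/ running_max m i <= h (running_max m) i.
Proof.
elim: m i => [|m IH] i; first by left.
have hU : h (running_max m) i <= h (running_max m.+1) i.
  by apply: (topical_le th) => j; apply: running_max_mono.
have hb : orbit m.+1 i <= h (running_max m.+1) i.
  apply: (topical_le th) => j; apply: le_trans (orbit_le_running_max m j) _.
  exact: running_max_mono.
rewrite /= -/(running_max m.+1); case: (leP (running_max m i) (orbit m.+1 i)) => _.
  by right.
by case: (IH i) => [->|/le_trans/(_ hU)]; [left|right].
Qed.

Definition height m := \big[Num.max/0]_i running_max m i.

Lemma running_max_le_height m i : running_max m i <= height m.
Proof. exact: le_bigmax. Qed.

Lemma height_unbounded C : exists m0, forall m, (m0 <= m)%N -> C < height m.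
Proof.
have [k [i Ck]] := h_unbounded C; exists k => m km.
apply: (lt_le_trans Ck); apply: (le_trans (orbit_le_running_max k i)).
exact: le_trans (running_max_mono _ _ i km) (running_max_le_height m i).
Qed.

Definition profile m i := running_max m i - height m.

Lemma profile_le0 m i : profile m i <= 0.
Proof. by rewrite subr_le0 running_max_le_height. Qed.

Lemma profile_subeigen m i :
  profile m i <= - height m \/ profile m i <= h (profile m) i.
Proof.
rewrite /profile (topicalD _ _ th).
by case: (running_max_subeigen m i) => ?; [left|right]; lra.
Qed.

Lemma exists_profile_eq0 m : exists i, profile m i = 0.
Proof.
have [_ [j _]] := h_unbounded 0.
have [i _ hi] := eq_bigmax j xpredT (running_max m) isT (fun i _ => running_max_ge0 m i).
by exists i; rewrite /profile /height hi subrr.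
Qed.

Section ClusterPoint.
Variable e : vec.
Hypothesis e_unit : forall i, 0 <= e i <= 1.
Hypothesis e_cluster : forall (B : set vec) m0,
  nbhs e B -> exists2 m, (m0 <= m)%N & B (fun i => expR (profile m i)).

(* [ln (e i)] on the coordinates where the profiles stay bounded along the cluster
   point, and [- L] on those where they tend to [-oo]. *)
Definition limit_profile (L : R) j := if 0 < e j then ln (e j) else - L.

Lemma profile_near_limit eta L m0 : 0 < eta -> exists2 m, (m0 <= m)%N &
  forall j, if 0 < e j then `|profile m j - ln (e j)| < eta else profile m j < - L.
Proof.
move=> eta0.
pose B j t := if 0 < e j then `|ln (e j) - ln t| < eta else t < expR (- L).
have [|m m0m e_m] := e_cluster [set x | forall j, B j (x j)] m0 _.
  apply: (@filter_forall _ _ (fun j (x : vec) => B j (x j)) (nbhs e) _) => j.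
  apply: (@nbhs_coord _ (fun _ => R) e j (B j)).
  rewrite /B; have [ej|ej] := boolP (0 < e j); rewrite ?ej ?(negbTE ej).
    exact: (cvgrPdist_lt _ _).1 (continuous_ln ej) _ eta0.
  have -> : e j = 0 by apply/eqP; rewrite eq_le leNgt ej; case/andP: (e_unit j).
  exact: (lt_nbhsl (expR_gt0 (- L))).
exists m => // j; have := e_m j; rewrite /B expRK ltr_expR distrC.
by case: ifP.
Qed.

Lemma limit_support_nonempty : exists i, 0 < e i.
Proof.
have [m _ near_e] := profile_near_limit 1 1 0 ltr01.
have [j pj] := exists_profile_eq0 m; exists j.
by have := near_e j; rewrite pj; case: ifP => // _; lra.
Qed.

Lemma limit_profile_le0 L : 0 <= L -> forall j, limit_profile L j <= 0.
Proof.
move=> L0 j; rewrite /limit_profile; case: ifPn => ej; last by rewrite oppr_le0.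
by rewrite ln_le0 //; case/andP: (e_unit j).
Qed.

Lemma limit_profile_subeigen L i : 0 < e i -> ln (e i) <= h (limit_profile L) i.
Proof.
move=> ei; apply/ler_addgt0Pr => eta eta0; have eta2 : 0 < eta / 2 by lra.
have [m0 tall] := height_unbounded (eta / 2 - ln (e i)).
have [m /tall tall_m near_e] := profile_near_limit (eta / 2) L m0 eta2.
have below : forall j, profile m j <= limit_profile L j + eta / 2.
  move=> j; have := near_e j; rewrite /limit_profile; case: ifP => _.
    by rewrite ltr_norml => /andP[_]; lra.
  by lra.
have := near_e i; rewrite ei ltr_norml => /andP[close _].
case: (profile_subeigen m i) => [|sub]; first by lra.
by have := topical_leD th below i; lra.
Qed.

Lemma limit_profile_step L c : (forall j, 0 < e j -> - ln (e j) <= L) ->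
  (forall j, `|h (fun _ => 0) j| <= c) ->
  forall j, limit_profile (L + c) j <= h (limit_profile L) j.
Proof.
move=> Le hc j; rewrite {1}/limit_profile; case: ifP => ej.
  exact: limit_profile_subeigen.
have above : forall j', (fun _ => 0) j' <= limit_profile L j' + L.
  by move=> j'; rewrite /limit_profile; case: ifP => ej'; [have := Le j' ej'|]; lra.
have := topical_leD th above j; have := hc j; rewrite ler_norml => /andP[hc0 _].
by lra.
Qed.

End ClusterPoint.

Lemma orbit_coord_bounded_below : exists i (C : R), forall k, - C <= orbit k i.
Proof.
have [|e e_unit e_cluster] := compact_seq_cluster (compact_unit_cube R N)
  (fun m i => expR (profile m i)).
  by move=> m i; rewrite /= in_itv /= expR_ge0 -expR0 ler_expR profile_le0.
have e01 : forall i, 0 <= e i <= 1 by move=> i; have := e_unit i; rewrite /= in_itv.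
have [i ei] := limit_support_nonempty _ e01 e_cluster.
have [c hc] := coord_bound (h (fun _ => 0)).
have [L hL] := coord_bound (fun j => ln (e j)).
have c0 : 0 <= c := le_trans (normr_ge0 _) (hc i).
have L0 : 0 <= L := le_trans (normr_ge0 _) (hL i).
have Le L' : L <= L' -> forall j, 0 < e j -> - ln (e j) <= L'.
  by move=> LL' j _; have := hL j; rewrite ler_norml => /andP[]; lra.
have chain k : forall j,
    limit_profile e (L + k%:R * c) j <= iter k h (limit_profile e L) j.
  elim: k => [|k IH] j; first by rewrite mul0r addr0.
  rewrite iterS -natr1 mulrDl mul1r addrA.
  apply: (le_trans (limit_profile_step _ e01 e_cluster _ _ _ hc j)).
    by apply: Le; rewrite lerDl mulr_ge0.
  exact: topical_le IH j.
exists i, (- ln (e i)) => k; rewrite opprK.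
have := chain k i; rewrite /limit_profile ei => /le_trans; apply.
apply: (topical_le (topical_iter k th)) => j.
exact: limit_profile_le0 _ e01 _ L0 j.
Qed.

End UnboundedOrbit.
Arguments orbit_coord_bounded_below {R N h}.

Definition lower_rate {R : realType} {N : nat} (g : ('I_N -> R) -> 'I_N -> R) i :=
  sup [set a : R | exists C, forall k, k%:R * a - C <= iter k g (fun _ => 0) i].

Section LowerRate.
Context {R : realType} {N : nat} {g : ('I_N -> R) -> 'I_N -> R}.
Hypothesis tg : topical g.

Local Notation orbit k := (iter k g (fun _ => 0)).

Lemma lower_rate_has_sup i :
  has_sup [set a : R | exists C, forall k, k%:R * a - C <= orbit k i].
Proof.
have [c hc] := coord_bound (g (fun _ => 0)).
have lin k : `|orbit k i| <= k%:R * c := iter_topical_linear k i tg hc.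
split.
  by exists (- c), 0 => k; have := lin k; rewrite ler_norml mulrN subr0 => /andP[].
exists (c + 1) => a [C aC]; rewrite leNgt; apply/negP => big.
have [k /= Ck] := filter_ex (nbhs_infty_gtr C).
have := aC k; have := lin k; rewrite ler_norml => /andP[_ up].
have : k%:R <= k%:R * (a - c) by rewrite ler_peMr // lerBrDl ltW // addrC.
by rewrite mulrBr; lra.
Qed.

Lemma lower_rate_ge i a C : (forall k, k%:R * a - C <= orbit k i) -> a <= lower_rate g i.
Proof. by move=> aC; apply: (sup_upper_bound (lower_rate_has_sup i)); exists C. Qed.

Lemma lower_rate_approx i {e} : 0 < e ->
  exists C, forall k, k%:R * (lower_rate g i - e) - C <= orbit k i.
Proof.
move=> e0; have [a [C aC] ea] := sup_adherent e0 (lower_rate_has_sup i).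
exists C => k; apply: le_trans (aC k); rewrite lerD2r.
by apply: ler_wpM2l => //; apply: ltW.
Qed.

(* Subtracting [a + e] turns the rate bound into boundedness of an orbit, and an
   unbounded orbit would have a coordinate growing at rate at least [a + e]. *)
Lemma orbit_upper_rate {a e} : (forall j, lower_rate g j <= a) -> 0 < e ->
  exists C, forall k j, orbit k j <= k%:R * (a + e) + C.
Proof.
move=> rate_a e0; pose h x i := g x i - (a + e).
have th : topical h := topical_subr _ tg.
have orbit_h k j : iter k h (fun _ => 0) j = orbit k j - k%:R * (a + e).
  by rewrite /h iter_topical_subr.
suff [C hC] : exists C, forall k j, iter k h (fun _ => 0) j <= C.
  by exists C => k j; have := hC k j; rewrite orbit_h; lra.
apply: contrapT => unbounded.
have h_unbounded C : exists k i, C < iter k h (fun _ => 0) i.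
  apply: contrapT => noC; apply: unbounded; exists C => k j.
  by rewrite leNgt; apply/negP => Ck; apply: noC; exists k, j.
have [i [C hC]] := orbit_coord_bounded_below th h_unbounded.
have := rate_a i; have : a + e <= lower_rate g i.
  by apply: (lower_rate_ge i (a + e) C) => k; have := hC k; rewrite orbit_h; lra.
by lra.
Qed.

Lemma cvg_max_lower_rate i (w : nat -> R) c :
  (forall j, lower_rate g j <= lower_rate g i) ->
  (forall k, orbit k i - c <= w k /\ exists j, w k <= orbit k j + c) ->
  w k / k%:R @[k --> \oo] --> lower_rate g i.
Proof.
move=> imax between; apply: cvg_linear_rate => e e0.
have [C1 low] := lower_rate_approx i e0; have [C2 up] := orbit_upper_rate imax e0.
have C1_ge0 : 0 <= C1 by have := low 0%N; rewrite mul0r /=; lra.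
have C2_ge0 : 0 <= C2 by have := up 0%N i; rewrite mul0r /=; lra.
exists (C1 + C2 + c) => k; have [lo [j hi]] := between k.
by have := low k; have := up k j; rewrite ler_norml mulrBr mulrDr; lra.
Qed.

End LowerRate.

Lemma le_vmax {R : realType} {n : nat} (x : 'I_n.+1 -> R) i : x i <= vmax x.
Proof. exact: le_bigmax. Qed.

Lemma vmax_attained {R : realType} {n : nat} (x : 'I_n.+1 -> R) : exists i, vmax x = x i.
Proof.
apply: (big_ind (fun y => exists i, y = x i)); first by exists ord0.
  by move=> _ _ [i ->] [j ->]; case: (leP (x i) (x j)); [exists j|exists i].
by move=> i _; exists i.
Qed.

Theorem corollary2p5 (R : realType) (n : nat)
    (f : ('I_n.+1 -> R) -> ('I_n.+1 -> R)) :
  topical f ->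
  exists i : 'I_n.+1, forall y : 'I_n.+1 -> R,
    (fun k : nat => iter k f y i / k%:R) @ \oo --> upper_cycle_time f.
Proof.
move=> tf.
have [i _ imax] := @arg_maxP _ _ _ ord0 xpredT (lower_rate f) isT.
have {}imax j : lower_rate f j <= lower_rate f i by apply: imax.
have vmax_rate : vmax (iter k f (fun _ => 0)) / k%:R @[k --> \oo] --> lower_rate f i.
  apply: (cvg_max_lower_rate tf i (fun k => vmax (iter k f (fun _ => 0))) 0 imax) => k.
  rewrite subr0; split; first exact: le_vmax.
  by have [j ->] := vmax_attained (iter k f (fun _ => 0)); exists j; rewrite addr0.
rewrite /upper_cycle_time (cvg_lim _ vmax_rate) //; exists i => y.
have [c hc] := coord_bound y.
apply: (cvg_max_lower_rate tf i (fun k => iter k f y i) c imax) => k.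
have : `|iter k f y i - iter k f (fun _ => 0) i| <= c.
  by apply: iter_topical_dist => // j; rewrite subr0.
by rewrite ler_norml => /andP[lo hi]; split; [lra | exists i; lra].
Qed.
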